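(* Let $n,f$ be integers with $1\le f\le n-1$ and $\Pi$ a set of $n$ processes. The following algorithm, using the oracle $\mathcal O.\mathrm{Cons}(\Pi,f)$, solves $(f+1)\text{-TAg}(\Pi,f)$: each process $p$ sends its initial value $v_p$ to all processes, waits until it has received initial values from $n-f$ processes, sets $x_p$ to the minimum of the values received, queries $\mathcal O.\mathrm{Cons}(\Pi,f)$ with $x_p$, and decides the value answered by the oracle. In particular $(f+1)\text{-TAg}(n,f)$ is $C$-reducible to $\mathrm{Cons}(n,f)$ (and hence, for every $k\in\{f+1,\dots,n\}$, $k\text{-TAg}(n,f)$ is equivalent to $\mathrm{Cons}(n,f)$ with respect to $C$-reducibility).
   Context: Model: a finite set of processes runs an asynchronous algorithm communicating by reliable message passing with unbounded delays and speeds; processes fail only by crashing. Time is $\mathcal T=\mathbb N$; a failure pattern $F$ for $\Pi$ is a nondecreasing map $\mathcal T\to2^\Pi$, $Faulty(F)=\bigcup_tF(t)$. A binary agreement problem $P$ for $\Pi$ maps each $(F,\vec V)$, $\vec V\in\{0,1\}^\Pi$, to a nonempty $P(F,\vec V)\subseteq\{0,1\}$; a task is $T=(P,f)$. An algorithm solves $T$ if in every run with $|Faulty(F)|\le f$ and initial values $\vec V$: every correct process eventually decides, decisions are irrevocable, no two processes decide differently, and decisions lie in $P(F,\vec V)$. $k\text{-TAg}_\Pi(F,\vec V)=\{0\}$ if at least $k$ entries of $\vec V$ are $0$; $=\{1\}$ if $\vec V$ is all-ones and $|Faulty(F)|\le k-1$; $=\{0,1\}$ otherwise; $k\text{-TAg}(\Pi,f)=(k\text{-TAg}_\Pi,f)$;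 $\mathrm{Cons}(\Pi,f)=|\Pi|\text{-TAg}(\Pi,f)$; $k\text{-TAg}(n,f)$, $\mathrm{Cons}(n,f)$ denote the versions for $\Pi=\{1,\dots,n\}$. Oracles: for $T=(P,f)$ on $\Pi$, $\mathcal O.T$ is a black box with consultants $\Pi$; its history is a sequence of successive consultations, in each of which every consultant may submit at most one query in $\{0,1\}$ and the oracle returns a common response $d$ with $d\in P(F,\vec V)$ for every $\vec V$ extending the partial query vector (the oracle may use the whole failure pattern, including future crashes), and every correct querier gets the response whenever at least $|\Pi|-f$ consultants query; $\mathcal O.T$ is the most general such oracle. $T_1\le_C T_2$ means there is an algorithm solving $T_1$ whose processes may additionally consult the oracle $\mathcal O.T_2$ (for a renamed copy of $T_2$ on the relevant processes). *)

From mathcomp Require Import all_boot.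
From mathcomp Require Import boolp.

Set Implicit Arguments.
Unset Strict Implicit.
Unset Printing Implicit Defensive.

(* Processes: Pi = 'I_n.  Time: nat.  Binary values: bool (false = 0, true = 1). *)

(* A failure pattern: F t = set of processes crashed by time t. *)
Definition failure_pattern (n : nat) := nat -> {set 'I_n}.

Definition fp_nondecreasing n (F : failure_pattern n) : Prop :=
  forall t t', t <= t' -> F t \subset F t'.

Definition Faulty n (F : failure_pattern n) : {set 'I_n} :=
  [set p | `[< exists t, p \in F t >] ].

Definition correct n (F : failure_pattern n) (p : 'I_n) : bool := p \notin Faulty F.

Definition kTAg n (k : nat) (F : failure_pattern n) (V : 'I_n -> bool) : {set bool} :=
  if k <= #|[set p | ~~ V p]| then [set false]
  else if [forall p, V p] && (#|Faulty F| <= k - 1) then [set true]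
  else [set: bool].

Definition Cons n (F : failure_pattern n) (V : 'I_n -> bool) : {set bool} := kTAg n F V.

Definition extends n (q : 'I_n -> option bool) (W : 'I_n -> bool) : Prop :=
  forall p b, q p = Some b -> W p = b.

(* A run is described by the times of the events of each process:          *)
(*   snd p       : time at which p sends v_p to all (its first step)        *)
(*   rcv p q     : time at which p receives q's initial value               *)
(*   wt p        : time at which p stops waiting (having >= n-f values)     *)
(*   qry p       : time at which p queries O.Cons(Pi,f) with x_p            *)
(*   rsp         : common response of the (single) oracle consultation      *)
(*   dec p       : time and value of p's (unique, hence irrevocable) decision *)
(* A process takes a step at time t only if it is not crashed at t.          *)

Definition rcvd_by n (rcv : 'I_n -> 'I_n -> option nat) (p : 'I_n) (t : nat)
  : {set 'I_n} :=
  [set q | if rcv p q is Some r then r <= t else false].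

(* x_p = minimum of the values received by the end of the wait *)
Definition xval n (V : 'I_n -> bool) (rcv : 'I_n -> 'I_n -> option nat)
  (p : 'I_n) (t : nat) : bool :=
  [forall q in rcvd_by rcv p t, V q].

Definition query_vec n (V : 'I_n -> bool) (rcv : 'I_n -> 'I_n -> option nat)
  (wt qry : 'I_n -> option nat) (p : 'I_n) : option bool :=
  match qry p, wt p with
  | Some _, Some tw => Some (xval V rcv p tw)
  | _, _ => None
  end.

Definition MinCons_run n (f : nat) (F : failure_pattern n) (V : 'I_n -> bool)
  (snd : 'I_n -> option nat) (rcv : 'I_n -> 'I_n -> option nat)
  (wt qry : 'I_n -> option nat) (rsp : option bool)
  (dec : 'I_n -> option (nat * bool)) : Prop :=
  (forall p s, snd p = Some s -> p \notin F s) /\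
  (forall p, correct F p -> snd p <> None) /\
  (* reliable channels: only sent messages are received, after being sent *)
  (forall p q r, rcv p q = Some r ->
     p \notin F r /\ exists s, snd q = Some s /\ s < r) /\
  (forall p q s, correct F p -> snd q = Some s -> rcv p q <> None) /\
  (forall p t, wt p = Some t ->
     p \notin F t /\ (exists s, snd p = Some s /\ s <= t) /\
     n - f <= #|rcvd_by rcv p t|) /\
  (forall p, correct F p -> wt p <> None) /\
  (forall p t, qry p = Some t ->
     p \notin F t /\ exists tw, wt p = Some tw /\ tw <= t) /\
  (forall p, correct F p -> qry p <> None) /\
  (* the oracle O.Cons(Pi, f) *)
  (forall d, rsp = Some d ->
     forall W, extends (query_vec V rcv wt qry) W -> d \in Cons F W) /\
  (n - f <= #|[set p | qry p != None]| -> rsp <> None) /\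
  (forall p t b, dec p = Some (t, b) ->
     p \notin F t /\ rsp = Some b /\ exists tq, qry p = Some tq /\ tq <= t) /\
  (forall p, correct F p -> qry p <> None -> rsp <> None -> dec p <> None).

Definition run_solves n (P : {set bool}) (F : failure_pattern n)
  (dec : 'I_n -> option (nat * bool)) : Prop :=
  (forall p, correct F p -> dec p <> None) /\
  (* agreement (irrevocability is built in: at most one decision per process) *)
  (forall p q tp tq bp bq, dec p = Some (tp, bp) -> dec q = Some (tq, bq) -> bp = bq) /\
  (forall p t b, dec p = Some (t, b) -> b \in P).

From Pilot Require Import Defs.
From mathcomp Require Import all_boot.
From mathcomp Require Import boolp.
From mathcomp Require Import zify.

Set Implicit Arguments.
Unset Strict Implicit.
Unset Printing Implicit Defensive.

(* Every process waits for n - f initial values, so if at least f + 1 initial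
   values are 0 it sees a 0 (n - f + (f + 1) > n) and queries 0; if all initial
   values are 1 everybody queries 1.  In both cases the query vector is
   extended by a constant vector on which Cons is determined, so the oracle
   answers the value required by (f+1)-TAg.  At least n - f correct processes
   query, hence the oracle does answer and every correct process decides. *)

Lemma card_setI_exists (T : finType) (A B : {set T}) :
  #|T| < #|A| + #|B| -> exists2 x, x \in A & x \in B.
Proof.
move=> AB_big.
have : 0 < #|A :&: B|.
  by have := cardsUI A B; have := max_card (A :|: B); lia.
by rewrite card_gt0 => /set0Pn [x]; rewrite inE => /andP [xA xB]; exists x.
Qed.

Lemma kTAg_all_false n k (F : failure_pattern n) :
  k <= n -> kTAg k F (fun=> false) = [set false].
Proof.
move=> le_kn; rewrite /kTAg.
suff -> : #|[set p : 'I_n | ~~ false]| = n by rewrite le_kn.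
by rewrite -[RHS](card_ord n); apply: eq_card => p; rewrite inE.
Qed.

Lemma kTAg_all_true n k (F : failure_pattern n) :
  #|Faulty F| < k -> kTAg k F (fun=> true) = [set true].
Proof.
move=> few_faulty; rewrite /kTAg.
have -> : #|[set p : 'I_n | ~~ true]| = 0.
  by apply/eqP; rewrite cards_eq0; apply/eqP/setP => p; rewrite !inE.
have -> : (k <= 0) = false by lia.
have -> : [forall p : 'I_n, true] by apply/forallP.
by have -> : #|Faulty F| <= k - 1 by lia.
Qed.

Lemma xval_false n f (V : 'I_n -> bool) rcv p t :
  f.+1 <= #|[set q | ~~ V q]| -> n - f <= #|rcvd_by rcv p t| ->
  xval V rcv p t = false.
Proof.
move=> many_zeros enough_rcvd.
have [|q q_rcvd q_zero] :=
  card_setI_exists (A := rcvd_by rcv p t) (B := [set q | ~~ V q]).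
  by rewrite card_ord; apply: leq_trans (leq_add enough_rcvd many_zeros); lia.
apply/negbTE/forallP => /(_ q); rewrite q_rcvd /=.
by move: q_zero; rewrite inE => /negbTE ->.
Qed.

Lemma xval_true n (V : 'I_n -> bool) rcv p t :
  [forall q, V q] -> xval V rcv p t.
Proof. by move=> /forallP all_ones; apply/forall_inP => q _. Qed.

Lemma query_vecP n (V : 'I_n -> bool) rcv wt qry p c :
  query_vec V rcv wt qry p = Some c ->
  exists2 tw, wt p = Some tw & c = xval V rcv p tw.
Proof.
by rewrite /query_vec; case: (qry p) => // _; case: (wt p) => // tw [<-]; exists tw.
Qed.

Lemma query_vec_true n (V : 'I_n -> bool) rcv wt qry :
  [forall q, V q] -> forall p c, query_vec V rcv wt qry p = Some c -> c = true.
Proof. by move=> all_ones p c /query_vecP [tw _ ->]; apply: xval_true. Qed.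

Section MinConsRun.

Variables (n f : nat) (F : failure_pattern n) (V : 'I_n -> bool).
Variables (snd : 'I_n -> option nat) (rcv : 'I_n -> 'I_n -> option nat).
Variables (wt qry : 'I_n -> option nat) (rsp : option bool).
Variable dec : 'I_n -> option (nat * bool).
Hypothesis run : MinCons_run f F V snd rcv wt qry rsp dec.

Let qv := query_vec V rcv wt qry.

Lemma run_response_defined : #|Faulty F| <= f -> rsp <> None.
Proof.
move=> few_faulty.
have [_ [_ [_ [_ [_ [_ [_ [correct_qry [_ [enough_qry _]]]]]]]]]] := run.
apply: enough_qry.
have correct_queries : ~: Faulty F \subset [set p | qry p != None].
  apply/subsetP => p; rewrite in_setC => p_correct; rewrite inE; apply/eqP.
  exact: correct_qry p_correct.
apply: leq_trans (subset_leq_card correct_queries).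
by rewrite -[n in n - f]card_ord -(cardsC (Faulty F)) leq_subLR leq_add2r.
Qed.

Lemma run_decides : #|Faulty F| <= f -> forall p, correct F p -> dec p <> None.
Proof.
move=> few_faulty p p_correct.
have [_ [_ [_ [_ [_ [_ [_ [correct_qry [_ [_ [_ correct_dec]]]]]]]]]]] := run.
by apply: correct_dec => //; [apply: correct_qry | apply: run_response_defined].
Qed.

Lemma run_decision_response p t b : dec p = Some (t, b) -> rsp = Some b.
Proof.
by have [_ [_ [_ [_ [_ [_ [_ [_ [_ [_ [dec_rsp _]]]]]]]]]]] := run => /dec_rsp [_ []].
Qed.

Lemma run_query_false :
  f.+1 <= #|[set q | ~~ V q]| -> forall p c, qv p = Some c -> c = false.
Proof.
move=> many_zeros p c /query_vecP [tw wt_p ->].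
have [_ [_ [_ [_ [waited _]]]]] := run.
by have [_ [_ enough_rcvd]] := waited _ _ wt_p; apply: xval_false enough_rcvd.
Qed.

(* Plain [Cons] would be the constructor of [seq]. *)
Lemma run_response_unanimous d b :
  rsp = Some d -> (forall p c, qv p = Some c -> c = b) ->
  d \in Defs.Cons F (fun=> b).
Proof.
have [_ [_ [_ [_ [_ [_ [_ [_ [oracle _]]]]]]]]] := run.
by move=> rsp_d unanimous; apply: (oracle _ rsp_d) => p c /unanimous ->.
Qed.

End MinConsRun.

Theorem mainTheorem5 (n f : nat) (Hf1 : 1 <= f) (Hfn : f <= n - 1)
  (F : failure_pattern n) (HF : fp_nondecreasing F) (HFf : #|Faulty F| <= f)
  (V : 'I_n -> bool)
  (snd : 'I_n -> option nat) (rcv : 'I_n -> 'I_n -> option nat)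
  (wt qry : 'I_n -> option nat) (rsp : option bool)
  (dec : 'I_n -> option (nat * bool)) :
  MinCons_run f F V snd rcv wt qry rsp dec ->
  run_solves (kTAg f.+1 F V) F dec.
Proof.
move=> run; split; first exact: run_decides run HFf.
split.
  move=> p q tp tq bp bq /(run_decision_response run) rsp_bp.
  by move=> /(run_decision_response run); rewrite rsp_bp => -[].
move=> p t b /(run_decision_response run) rsp_b; rewrite /kTAg.
case: ifP => [many_zeros | _].
  have := run_response_unanimous run rsp_b (run_query_false run many_zeros).
  by rewrite /Defs.Cons kTAg_all_false // inE.
case: ifP => [/andP [all_ones _] | _]; last by rewrite inE.
have := run_response_unanimous run rsp_b (query_vec_true all_ones).
by rewrite /Defs.Cons kTAg_all_true ?inE //; lia.
Qed.
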